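(* Let $t$ be an indeterminate and let $\rho''_S: VSB_2\to GL_2(\mathbb{Z}[t^{\pm1}])$ be a representation extending the standard representation of $B_2$, i.e. $\rho''_S(\sigma_1)=\begin{pmatrix}0&t\\1&0\end{pmatrix}$. Then $\rho''_S(\tau_1)=\begin{pmatrix}a&ct\\c&a\end{pmatrix}$ for some $a,c\in\mathbb{Z}[t^{\pm1}]$, and $\rho''_S(\nu_1)$ is one of the following: (1) $\begin{pmatrix}p&q\\ \frac{1-p^2}{q}&-p\end{pmatrix}$ with $p,q\in\mathbb{Z}[t^{\pm1}]$; (2) $\begin{pmatrix}-1&0\\ r&1\end{pmatrix}$ with $r\in\mathbb{Z}[t^{\pm1}]$; (3) $\begin{pmatrix}1&0\\ r&-1\end{pmatrix}$ with $r\in\mathbb{Z}[t^{\pm1}]$; (4) $\begin{pmatrix}-1&0\\ 0&-1\end{pmatrix}$; (5) $\begin{pmatrix}1&0\\ 0&1\end{pmatrix}$.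
   Context: The virtual singular braid group $VSB_2$ is the group generated by $\sigma_1,\tau_1,\nu_1$ subject to the relations $\sigma_1\tau_1=\tau_1\sigma_1$ and $\nu_1^2=1$. It contains the braid group $B_2=\langle\sigma_1\rangle$ and the singular braid group $SB_2=\langle\sigma_1,\tau_1\mid \sigma_1\tau_1=\tau_1\sigma_1\rangle$. The standard representation of $B_2$ sends $\sigma_1$ to $\begin{pmatrix}0&t\\1&0\end{pmatrix}$. In case (1), $q$ is nonzero and the entry $\frac{1-p^2}{q}$ lies in $\mathbb{Z}[t^{\pm1}]$. *)

From HB Require Import structures.
From mathcomp Require Import all_boot all_order all_algebra.
From mathcomp Require Import fraction.
Set Implicit Arguments. Unset Strict Implicit. Unset Printing Implicit Defensive.
Import Order.TTheory GRing.Theory Num.Theory.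
Local Open Scope ring_scope.

(* Ambient field: rational functions Q(t) realised as {fraction {poly int}};
   the ring Z[t, t^-1] is the subring of elements p / t^n, p in Z[t]. *)
Notation QT := {fraction {poly int}}.

Definition tL : QT := tofrac ('X : {poly int}).

Definition laurent (x : QT) : Prop :=
  exists (n : nat) (p : {poly int}), x = tofrac p / tL ^+ n.

Definition mx_laurent (A : 'M[QT]_2) : Prop := forall i j, laurent (A i j).

Definition GL2L (A : 'M[QT]_2) : Prop :=
  mx_laurent A /\
  exists B : 'M[QT]_2, mx_laurent B /\ A *m B = 1%:M /\ B *m A = 1%:M.

Definition mx2 (a b c d : QT) : 'M[QT]_2 :=
  \matrix_(i < 2, j < 2)
    if (i == 0 :> nat) then (if (j == 0 :> nat) then a else b)
    else (if (j == 0 :> nat) then c else d).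

(* A representation VSB_2 -> GL_2(Z[t^{+-1}]) is determined by the images
   S, T, N of sigma_1, tau_1, nu_1, which must lie in GL_2(Z[t^{+-1}])
   and satisfy the defining relations S T = T S and N^2 = 1. *)
Definition VSB2_rep (S T N : 'M[QT]_2) : Prop :=
  [/\ GL2L S, GL2L T, GL2L N, S *m T = T *m S & N *m N = 1%:M].

From mathcomp Require Import all_boot all_order all_algebra.
From mathcomp Require Import fraction.
Set Implicit Arguments. Unset Strict Implicit. Unset Printing Implicit Defensive.
Import GRing.Theory.
Local Open Scope ring_scope.

(* Commuting with [mx2 0 t 1 0] forces
   [T = a + c S].  For [N *m N = 1] with upper right entry [q]: if [q != 0]
   the off-diagonal equation [q (p + s) = 0] makes the trace vanish, and the
   lower left entry is then [(1 - p^2) / q]; it lies in Z[t^{+-1}] because it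
   is an entry of [N].  If [q = 0], the diagonal entries are square roots of
   [1], and when they are equal the lower left equation [r (p + s) = 0]
   reads [2 p r = 0], so [r = 0] since [Q(t)] has characteristic zero. *)

Lemma ord2_cases (i : 'I_2) : i = 0 \/ i = 1.
Proof. by case: i => [[|[|k]] ?]; [left|right|] => //; apply: val_inj. Qed.

Lemma mx2E (A : 'M[QT]_2) : A = mx2 (A 0 0) (A 0 1) (A 1 0) (A 1 1).
Proof.
apply/matrixP => i j; rewrite !mxE.
by case: (ord2_cases i) => ->; case: (ord2_cases j) => ->.
Qed.

Lemma mx2_mul a b c d a' b' c' d' :
  mx2 a b c d *m mx2 a' b' c' d' =
  mx2 (a * a' + b * c') (a * b' + b * d') (c * a' + d * c') (c * b' + d * d').
Proof.
apply/matrixP => i j; rewrite !mxE !big_ord_recl big_ord0 addr0 !mxE.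
by case: (ord2_cases i) => ->; case: (ord2_cases j) => ->.
Qed.

Lemma mx2_one : 1%:M = mx2 1 0 0 1.
Proof.
apply/matrixP => i j; rewrite !mxE.
by case: (ord2_cases i) => ->; case: (ord2_cases j) => ->.
Qed.

Lemma mx2_inj a b c d a' b' c' d' :
  mx2 a b c d = mx2 a' b' c' d' -> [/\ a = a', b = b', c = c' & d = d'].
Proof.
move=> /matrixP eqA.
by have := eqA 0 0; have := eqA 0 1; have := eqA 1 0; have := eqA 1 1;
  rewrite !mxE /= => -> -> -> ->.
Qed.

Lemma QT_two_neq0 : (2%:R : QT) != 0.
Proof. by rewrite -(rmorph_nat (@tofrac _)) tofrac_eq0 -polyC_natr polyC_eq0. Qed.

Lemma mx2_commute_companion x a b c d :
  mx2 0 x 1 0 *m mx2 a b c d = mx2 a b c d *m mx2 0 x 1 0 -> b = c * x /\ d = a.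
Proof.
rewrite !mx2_mul => /mx2_inj [_ _].
by rewrite !(mul0r, mulr0, mul1r, mulr1, addr0, add0r) => -> ->.
Qed.

Lemma mx2_involution_offdiag p q r s :
  q != 0 -> mx2 p q r s *m mx2 p q r s = 1%:M ->
  s = - p /\ r = (1 - p ^+ 2) / q.
Proof.
move=> q_neq0; rewrite mx2_one mx2_mul => /mx2_inj [e00 e01 _ _].
have -> : s = - p.
  have /eqP : q * (s + p) = 0 by rewrite mulrDr addrC (mulrC q p).
  by rewrite mulf_eq0 (negbTE q_neq0) addr_eq0 => /eqP.
by split=> //; rewrite -e00 expr2 addrC addKr [q * r]mulrC mulfK.
Qed.

Lemma mx2_involution_lower p r s :
  mx2 p 0 r s *m mx2 p 0 r s = 1%:M ->
  [\/ p = -1 /\ s = 1, p = 1 /\ s = -1,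
      [/\ p = -1, r = 0 & s = -1] | [/\ p = 1, r = 0 & s = 1]].
Proof.
rewrite mx2_one mx2_mul => /mx2_inj [e00 _ e10 e11].
move: e00 e11 e10; rewrite !(mul0r, mulr0, addr0, add0r) => pp1 ss1 e10.
have r_eq0_of_double (e : QT) : e ^+ 2 = 1 -> r * (e + e) = 0 -> r = 0.
  move=> ee1 /eqP; rewrite -mulr2n -mulr_natr !mulf_eq0.
  case/or3P=> [/eqP //|/eqP e0|]; last by rewrite (negbTE QT_two_neq0).
  by move: ee1; rewrite e0 expr0n => /esym/eqP; rewrite oner_eq0.
have rps0 : r * (p + s) = 0 by rewrite mulrDr [r * s]mulrC.
move/eqP: pp1; rewrite -expr2 sqrf_eq1 => /orP[] /eqP p_eq;
  move/eqP: ss1; rewrite -expr2 sqrf_eq1 => /orP[] /eqP s_eq;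
  rewrite p_eq s_eq in rps0 *.
- by constructor 4; split=> //; apply: r_eq0_of_double rps0; rewrite expr1n.
- by constructor 2.
- by constructor 1.
- by constructor 3; split=> //; apply: r_eq0_of_double rps0; rewrite sqrrN expr1n.
Qed.

Theorem theorem5p1 (T N : 'M[QT]_2) :
  VSB2_rep (mx2 0 tL 1 0) T N ->
  (exists a c : QT, laurent a /\ laurent c /\ T = mx2 a (c * tL) c a) /\
  ((exists p q : QT, [/\ laurent p, laurent q, q != 0,
                          laurent ((1 - p ^+ 2) / q) &
                          N = mx2 p q ((1 - p ^+ 2) / q) (- p)]) \/
      (exists r : QT, laurent r /\ N = mx2 (-1) 0 r 1) \/
      (exists r : QT, laurent r /\ N = mx2 1 0 r (-1)) \/
      N = mx2 (-1) 0 0 (-1) \/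
      N = mx2 1 0 0 1).
Proof.
case=> _ [LT _] [LN _] ST_comm NN1.
split.
  move: ST_comm; rewrite [T]mx2E => /mx2_commute_companion [-> ->].
  by exists (T 0 0), (T 1 0); split; [|split]; [exact: LT|exact: LT|].
move: NN1; rewrite [N]mx2E.
have [-> NN1 | q_neq0 NN1] := eqVneq (N 0 1) 0.
  have Lr := LN 1 0.
  case: (mx2_involution_lower NN1) => [[-> ->]|[-> ->]|[-> -> ->]|[-> -> ->]].
  - by right; left; exists (N 1 0).
  - by right; right; left; exists (N 1 0).
  - by do 3 right; left.
  - by do 4 right.
have [s_eq r_eq] := mx2_involution_offdiag q_neq0 NN1.
left; exists (N 0 0), (N 0 1).
by split; rewrite -?r_eq -?s_eq //; apply: LN.
Qed.
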